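(* Assume $n\ge3$. Then every zero of $F$ that lies strictly between two zeros of $g$ (i.e. between two singularities of $F$) is not acceptable.
   Context: Data: an integer $N\ge 2$, reals $x_A<x_B$, $R=x_B-x_A$, and bins $i=1,\dots,N$ with widths $\Delta x_i>0$ and centers $x_i$ that tile $[x_A,x_B]$ contiguously in increasing order, so that $x_1-x_A=\Delta x_1/2$, $x_N-x_A=R-\Delta x_N/2$ and $0<x_1-x_A<\dots<x_N-x_A<R$. The counts are $y_i\in\{0,1,2,\dots\}$, $M=\sum_i y_i$, and $n$ is the number of indices with $y_i\ge1$. Write $d_i=x_i-x_A$. Define $$g(a)=\sum_{i=1}^N y_i\frac{d_i}{1+a d_i}$$ for $a\notin\{-1/d_i: y_i\ge 1\}$; these excluded points are the poles of $g$. Define $$F(a)=1+\frac R2\Big(a-\frac{M}{g(a)}\Big)$$ wherever $g(a)$ is finite and nonzero. At poles of $g$, $F(a)=1+aR/2$ by continuity. Let $\lambda(a)=M/(R(1+aR/2))$ for $a\neq-2/R$. A zero $a^*$ of $F$ is called acceptable if $a^*\ne-2/R$ and $\lambda(a^* )(1+a^*d_i)\ge0$ for all $i$, i.e. the linear model $f(x)=\lambda(1+a(x-x_A))$ with $(a,\lambda)=(a^*,\lambda(a^* ))$ has non-negative Poisson means $\mu_i=f(x_i)\Delta x_i$ in every bin. *)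

From mathcomp Require Import all_boot all_order all_algebra.
Set Implicit Arguments. Unset Strict Implicit. Unset Printing Implicit Defensive.
Import Order.TTheory GRing.Theory Num.Theory.
Local Open Scope ring_scope.

Section Defs.
Variables (R : realFieldType) (N : nat).
Variables (xA xB : R) (x : 'I_N -> R) (y : 'I_N -> nat).

Definition dist (i : 'I_N) : R := x i - xA.
Definition range : R := xB - xA.

Definition Mtot : R := (\sum_(i < N) y i)%N%:R.
Definition nonempty_bins : nat := #|[set i : 'I_N | (0 < y i)%N]|.

Definition is_pole (a : R) : bool :=
  [exists i : 'I_N, (0 < y i)%N && (1 + a * dist i == 0)].

Definition gfun (a : R) : R :=
  \sum_(i < N) (y i)%:R * (dist i / (1 + a * dist i)).

(* F, extended by continuity at poles of g *)
Definition Ffun (a : R) : R :=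
  if is_pole a then 1 + a * range / 2
  else 1 + range / 2 * (a - Mtot / gfun a).

(* a is a zero of F: F is defined at a (g finite and nonzero, or a pole) and F(a)=0 *)
Definition F_zero (a : R) : Prop :=
  (is_pole a \/ gfun a != 0) /\ Ffun a = 0.

Definition g_zero (a : R) : Prop := ~~ is_pole a /\ gfun a = 0.

Definition lambda (a : R) : R := Mtot / (range * (1 + a * range / 2)).

Definition acceptable (a : R) : Prop :=
  a != - 2 / range /\ forall i : 'I_N, 0 <= lambda a * (1 + a * dist i).

End Defs.

From mathcomp Require Import all_boot all_order all_algebra.
From mathcomp Require Import lra.
Set Implicit Arguments. Unset Strict Implicit. Unset Printing Implicit Defensive.
Import Order.TTheory GRing.Theory Num.Theory.
Local Open Scope ring_scope.

(* All offsets d_i = x_i - x_A are positive, so each term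
   y_i d_i / (1 + a d_i) of g has the sign of 1 + a d_i, and 1 + a d_i is
   strictly increasing in a.  If z1 < a is a zero of g, then not all the
   nonempty bins can have 1 + a d_i <= 0 (otherwise every term of g(z1) would
   be negative); symmetrically a zero z2 > a forbids 1 + a d_i >= 0 for all
   of them.  Hence between two zeros of g there are nonempty bins i, j with
   1 + a d_i > 0 > 1 + a d_j, and acceptability (lambda(a) (1 + a d_k) >= 0
   for every k) forces lambda(a) = 0.  But lambda(a) = M / (R (1 + aR/2)) is
   nonzero as soon as M > 0, R > 0 and a <> -2/R. *)

Lemma weighted_sum_gt0 (R : realFieldType) (N : nat) (y : 'I_N -> nat)
    (f : 'I_N -> R) (i0 : 'I_N) :
  (0 < y i0)%N -> (forall i, (0 < y i)%N -> 0 < f i) ->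
  0 < \sum_(i < N) (y i)%:R * f i.
Proof.
move=> y_i0 f_pos; rewrite (bigD1 i0) //=; apply: ltr_wpDr.
  apply: sumr_ge0 => i _; have [->|y_i] := posnP (y i); first by rewrite mul0r.
  by rewrite mulr_ge0 ?ler0n ?ltW ?f_pos.
by rewrite mulr_gt0 ?ltr0n ?f_pos.
Qed.

Section SignOfG.
Variables (R : realFieldType) (N : nat) (xA : R) (x : 'I_N -> R) (y : 'I_N -> nat).
Hypothesis dist_gt0 : forall i, 0 < dist xA x i.
Variable i0 : 'I_N.
Hypothesis y_i0 : (0 < y i0)%N.

Lemma gfun_gt0 (z : R) :
  (forall i, (0 < y i)%N -> 0 < 1 + z * dist xA x i) -> 0 < gfun xA x y z.
Proof.
move=> den_pos; rewrite /gfun; apply: (weighted_sum_gt0 y_i0) => i y_i.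
by rewrite divr_gt0 ?dist_gt0 ?den_pos.
Qed.

Lemma gfun_lt0 (z : R) :
  (forall i, (0 < y i)%N -> 1 + z * dist xA x i < 0) -> gfun xA x y z < 0.
Proof.
move=> den_neg; rewrite -oppr_gt0 /gfun -sumrN.
under eq_bigr => i _ do rewrite -mulrN.
apply: (weighted_sum_gt0 y_i0) => i y_i.
by rewrite -mulrN -invrN divr_gt0 ?dist_gt0 // oppr_gt0 den_neg.
Qed.

Lemma pos_bin_right_of_g_zero (z a : R) :
  gfun xA x y z = 0 -> z < a ->
  exists2 i, (0 < y i)%N & 0 < 1 + a * dist xA x i.
Proof.
move=> gz0 za; apply/exists_inP/contraT => /exists_inPn no_pos.
suff : gfun xA x y z < 0 by rewrite gz0 ltxx.
apply: gfun_lt0 => i y_i; apply: lt_le_trans (_ : 1 + a * dist xA x i <= 0).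
  by rewrite ltrD2l ltr_pM2r.
by rewrite leNgt no_pos.
Qed.

Lemma neg_bin_left_of_g_zero (z a : R) :
  gfun xA x y z = 0 -> a < z ->
  exists2 i, (0 < y i)%N & 1 + a * dist xA x i < 0.
Proof.
move=> gz0 az; apply/exists_inP/contraT => /exists_inPn no_neg.
suff : 0 < gfun xA x y z by rewrite gz0 ltxx.
apply: gfun_gt0 => i y_i; apply: le_lt_trans (_ : 0 <= 1 + a * dist xA x i) _.
  by rewrite leNgt no_neg.
by rewrite ltrD2l ltr_pM2r.
Qed.

End SignOfG.

Lemma dist_gt0_of_tiling (R : realFieldType) (N : nat) (xA : R)
    (dx x : 'I_N -> R) :
  (forall i, 0 < dx i) ->
  (forall i : 'I_N, x i = xA + \sum_(j < N | (j < i)%N) dx j + dx i / 2) ->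
  forall i, 0 < dist xA x i.
Proof.
move=> dx_gt0 x_def i; rewrite /dist x_def addrAC [xA + _]addrC addrK.
by rewrite ltr_wpDl ?divr_gt0 // sumr_ge0 // => j _; rewrite ltW.
Qed.

Lemma nonempty_bin_exists (N : nat) (y : 'I_N -> nat) :
  (0 < nonempty_bins y)%N -> exists i, (0 < y i)%N.
Proof.
by rewrite /nonempty_bins card_gt0 => /set0Pn[i]; rewrite inE; exists i.
Qed.

Lemma lambda_neq0 (R : realFieldType) (N : nat) (xA xB : R) (y : 'I_N -> nat)
    (i0 : 'I_N) (a : R) :
  (0 < y i0)%N -> xA < xB -> a != - 2 / range xA xB ->
  lambda xA xB y a != 0.
Proof.
move=> y_i0 hAB a_ne; have range_gt0 : 0 < range xA xB by rewrite subr_gt0.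
have M_gt0 : 0 < Mtot R y.
  by rewrite ltr0n (bigD1 i0) //= ltn_addr.
rewrite /lambda mulf_neq0 ?(gt_eqF M_gt0) // invr_neq0 //.
rewrite mulf_neq0 ?(gt_eqF range_gt0) //.
apply: contra a_ne => /eqP den0; apply/eqP.
apply: (mulIf (lt0r_neq0 range_gt0)); rewrite divfK ?(lt0r_neq0 range_gt0) //; lra.
Qed.

Lemma eq0_of_sign_change (R : realFieldType) (l u v : R) :
  0 < u -> v < 0 -> 0 <= l * u -> 0 <= l * v -> l = 0.
Proof. by move=> u_gt0 v_lt0; rewrite pmulr_lge0 // nmulr_lge0 // => *; lra. Qed.

Theorem mainTheorem8 (R : realFieldType) (N : nat) (xA xB : R)
    (dx x : 'I_N -> R) (y : 'I_N -> nat) :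
  (2 <= N)%N ->
  xA < xB ->
  (forall i, 0 < dx i) ->
  (\sum_(i < N) dx i = xB - xA) ->
  (forall i : 'I_N, x i = xA + \sum_(j < N | (j < i)%N) dx j + dx i / 2) ->
  (3 <= nonempty_bins y)%N ->
  forall z1 z2 a : R,
    g_zero xA x y z1 -> g_zero xA x y z2 -> z1 < a < z2 ->
    F_zero xA xB x y a ->
    ~ acceptable xA xB x y a.
Proof.
move=> _ hAB dx_gt0 _ x_def n_ge3 z1 z2 a [_ g_z1] [_ g_z2] /andP[z1a az2] _.
move=> [a_ne means_ge0].
have dist_gt0 := dist_gt0_of_tiling dx_gt0 x_def.
have [i0 y_i0] := nonempty_bin_exists (leq_trans (isT : 0 < 3)%N n_ge3).
have [ip _ pos_ip] := pos_bin_right_of_g_zero dist_gt0 y_i0 g_z1 z1a.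
have [ineg _ neg_ineg] := neg_bin_left_of_g_zero dist_gt0 y_i0 g_z2 az2.
have lambda0 := eq0_of_sign_change pos_ip neg_ineg
  (means_ge0 ip) (means_ge0 ineg).
by move/eqP: lambda0; apply/negP/(lambda_neq0 y_i0).
Qed.
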